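(* Let $n,d\in\mathbb{Z}_+$ and $m=\tfrac{n^2+n+2}{2}$. Consider $n+md$ qubits, split as an $n$-qubit register holding $x=(x_0,\dots,x_{n-1})\in\mathbb{F}_2^n$, a $d$-qubit register holding $y=(y_0,\dots,y_{d-1})\in\mathbb{F}_2^d$, and $(m-1)d$ ancilla qubits. Let $U_{\mathrm{QUBO}}$ be any unitary with $$U_{\mathrm{QUBO}}\ket{x}\ket{y}\ket{0}^{\otimes(m-1)d}=\ket{x}\ket{y}\bigotimes_{j=0}^{n-1}\bigotimes_{a=0}^{d-1}\Big(\ket{y_a\oplus x_j}\bigotimes_{k=j+1}^{n-1}\ket{y_a\oplus x_j\oplus x_k}\Big)$$ for all $x,y$. Then such a $U_{\mathrm{QUBO}}$ can be implemented by a quantum circuit consisting only of CNOT gates, of depth $O(\log_2(n)+\log_2(d))$.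
   Context: $\oplus$ denotes addition modulo 2 (XOR). $\ket{x}=\ket{x_0}\cdots\ket{x_{n-1}}$ denotes the computational basis state of a bit string. *)

(* CNOT circuits acting on computational basis
   states, represented as bit strings (seq bool), qubit i = i-th entry. *)
From mathcomp Require Import all_boot.
Set Implicit Arguments. Unset Strict Implicit. Unset Printing Implicit Defensive.

(* A CNOT gate is a pair (control, target). *)
Definition cnot := (nat * nat)%type.
(* A layer: a set of CNOT gates applied in parallel (on disjoint qubits). *)
Definition layer := seq cnot.
Definition circuit := seq layer.

Definition depth (c : circuit) : nat := size c.

Definition valid_gate (N : nat) (g : cnot) : bool :=
  [&& g.1 < N, g.2 < N & g.1 != g.2].

Definition valid_layer (N : nat) (L : layer) : bool :=
  all (valid_gate N) L && uniq (flatten [seq [:: g.1; g.2] | g <- L]).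

Definition valid_circuit (N : nat) (c : circuit) : bool :=
  all (valid_layer N) c.

Definition apply_gate (g : cnot) (s : seq bool) : seq bool :=
  set_nth false s g.2 (addb (nth false s g.2) (nth false s g.1)).

(* Gates within a layer are disjoint, hence commute; apply them in list order. *)
Definition apply_layer (L : layer) (s : seq bool) : seq bool :=
  foldl (fun t g => apply_gate g t) s L.

Definition run_circuit (c : circuit) (s : seq bool) : seq bool :=
  foldl (fun t L => apply_layer L t) s c.

Definition qubo_m (n : nat) : nat := (n ^ 2 + n + 2) %/ 2.

Definition qubo_input (n d : nat) (x y : seq bool) : seq bool :=
  x ++ y ++ nseq ((qubo_m n - 1) * d) false.

Definition qubo_output (n d : nat) (x y : seq bool) : seq bool :=
  x ++ y ++
  flatten [seq flatten [seq
      (addb (nth false y a) (nth false x j)) ::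
      [seq addb (addb (nth false y a) (nth false x j)) (nth false x k)
         | k <- iota j.+1 (n - j.+1)]
    | a <- iota 0 d] | j <- iota 0 n].

From mathcomp Require Import all_boot zify.
From Stdlib Require Import FunctionalExtensionality.
Set Implicit Arguments. Unset Strict Implicit. Unset Printing Implicit Defensive.

(* Every ancilla (j, a, k) must receive x_j, y_a and, when k > j, x_k.  Grouping
   the ancillas by the data qubit they need turns the circuit into three rounds of
   fan-outs: in each, every data qubit is XORed onto its own set of at most
   n^2 d <= 2^K ancillas, and these sets are disjoint.  A fan-out onto targets in an
   arbitrary state costs depth 2K + 1: let D be the doubling circuit, whose round r
   copies entry i of every target list onto entry i + 2^r.  D is linear and its
   layers are involutions, so  rev D ++ [source -> first target] ++ D  maps f to
   f + D(delta), where delta carries the source value on the first target only;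
   D spreads it over the whole list. *)

Lemma uniq_flatten_mem (T : eqType) (ss : seq (seq T)) s :
  uniq (flatten ss) -> s \in ss -> uniq s.
Proof.
by move=> uss /perm_to_rem/perm_flatten/perm_uniq; rewrite uss cat_uniq => /esym/and3P[].
Qed.

Lemma uniq_flatten_eq (T : eqType) (ss : seq (seq T)) s1 s2 z :
  uniq (flatten ss) -> s1 \in ss -> s2 \in ss -> z \in s1 -> z \in s2 -> s1 = s2.
Proof.
elim: ss => [|s ss IH] //=; rewrite cat_uniq => /and3P[_ /hasPn s_ss uss].
have inss t : t \in ss -> z \in t -> z \notin s.
  by move=> tss zt; apply: s_ss; apply/flattenP; exists t.
rewrite !inE => /predU1P[-> | s1ss] /predU1P[-> | s2ss] // z1 z2.
- by rewrite (negPf (inss _ s2ss z2)) in z1.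
- by rewrite (negPf (inss _ s1ss z1)) in z2.
- exact: IH.
Qed.

Lemma uniq_flatten_map (A B : eqType) (F : A -> seq B) s :
  uniq s -> {in s, forall x, uniq (F x)} ->
  (forall x y z, x \in s -> y \in s -> z \in F x -> z \in F y -> x = y) ->
  uniq (flatten (map F s)).
Proof.
elim: s => [|x s IH] //= /andP[xs us] uF disjF.
rewrite cat_uniq uF ?mem_head // IH //=; first last.
- by move=> y y' z ys y's; apply: disjF; rewrite inE ?ys ?y's orbT.
- by move=> y ys; apply: uF; rewrite inE ys orbT.
rewrite andbT; apply/hasPn => z /flatten_mapP[y ys zy]; apply/negP => zx.
have xy : x = y by apply: (disjF x y z); rewrite ?inE ?eqxx ?ys ?orbT.
by rewrite xy ys in xs.
Qed.

Lemma uniq_flatten_map_sub (A B : eqType) (h e : A -> seq B) s :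
  uniq (flatten (map h s)) -> {in s, forall x, uniq (e x) /\ {subset e x <= h x}} ->
  uniq (flatten (map e s)).
Proof.
elim: s => [|x s IH] //=; rewrite !cat_uniq => /and3P[_ /hasPn hx uh] eh.
have [uex sex] := eh x (mem_head _ _).
rewrite uex IH //=; last by move=> y ys; apply: eh; rewrite inE ys orbT.
rewrite andbT; apply/hasPn => z /flatten_mapP[y ys zy]; apply/negP => /sex zx.
have [_ sey] : uniq (e y) /\ {subset e y <= h y} by apply: eh; rewrite inE ys orbT.
have /hx : z \in flatten (map h s) by apply/flatten_mapP; exists y; last exact: sey.
by rewrite zx.
Qed.

Definition sem_gate (g : cnot) (f : nat -> bool) : nat -> bool :=
  fun i => if i == g.2 then f i (+) f g.1 else f i.

Definition sem_layer (L : layer) (f : nat -> bool) : nat -> bool :=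
  foldl (fun h g => sem_gate g h) f L.

Definition sem_circuit (c : circuit) (f : nat -> bool) : nat -> bool :=
  foldl (fun h L => sem_layer L h) f c.

Definition xorf (f h : nat -> bool) : nat -> bool := fun i => f i (+) h i.

Definition wires (L : layer) : seq nat := flatten [seq [:: g.1; g.2] | g <- L].

Definition targets (L : layer) : seq nat := [seq g.2 | g <- L].

Definition disjoint_layers (c : circuit) : bool := all (fun L => uniq (wires L)) c.

Lemma nth_apply_gate g s : nth false (apply_gate g s) = sem_gate g (nth false s).
Proof.
apply: functional_extensionality => i.
by rewrite nth_set_nth /sem_gate /=; case: eqP => [->|].
Qed.

Lemma nth_apply_layer L s : nth false (apply_layer L s) = sem_layer L (nth false s).
Proof.
elim: L s => [|g L IH] s //=.
by rewrite -/(apply_layer L _) -/(sem_layer L _) IH nth_apply_gate.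
Qed.

Lemma nth_run_circuit c s : nth false (run_circuit c s) = sem_circuit c (nth false s).
Proof.
elim: c s => [|L c IH] s //=.
by rewrite -/(run_circuit c _) -/(sem_circuit c _) IH nth_apply_layer.
Qed.

Lemma size_apply_layer N L s :
  all (valid_gate N) L -> size s = N -> size (apply_layer L s) = N.
Proof.
elim: L s => [|g L IH] s //= /andP[/and3P[_ g2N _] vL] sN; apply: IH => //.
by rewrite size_set_nth sN; apply/maxn_idPr.
Qed.

Lemma size_run_circuit N c s :
  valid_circuit N c -> size s = N -> size (run_circuit c s) = N.
Proof.
elim: c s => [|L c IH] s //= /andP[/andP[vL _] vc] sN.
by apply: IH => //; apply: size_apply_layer.
Qed.

Lemma valid_circuit_cat N c1 c2 :
  valid_circuit N (c1 ++ c2) = valid_circuit N c1 && valid_circuit N c2.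
Proof. exact: all_cat. Qed.

Lemma wires_cons g L : wires (g :: L) = g.1 :: g.2 :: wires L.
Proof. by []. Qed.

Lemma mem_wires L g : g \in L -> (g.1 \in wires L) && (g.2 \in wires L).
Proof.
by move=> gL; apply/andP; split; apply/flatten_mapP; exists g; rewrite ?inE ?eqxx ?orbT.
Qed.

Lemma targets_wires L : {subset targets L <= wires L}.
Proof. by move=> _ /mapP[g gL ->]; case/andP: (mem_wires gL). Qed.

Lemma valid_layer_wires N L :
  uniq (wires L) -> {in wires L, forall z, z < N} -> valid_layer N L.
Proof.
move=> uL wN; rewrite /valid_layer uL andbT; apply/allP => g gL.
have /andP[g1L g2L] := mem_wires gL; rewrite /valid_gate !wN //=.
elim: L uL gL {wN g1L g2L} => [|h L IH] //.
by rewrite wires_cons /= inE negb_or => /andP[/andP[h12 _] /andP[_ uL]] /predU1P[-> | /IH->].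
Qed.

Lemma sem_layer_notin L f i : i \notin targets L -> sem_layer L f i = f i.
Proof.
elim: L f => [|g L IH] f //=; rewrite inE => /norP[ig iL].
by rewrite IH // /sem_gate (negPf ig).
Qed.

Lemma sem_layer_target L f c t :
  uniq (wires L) -> (c, t) \in L -> sem_layer L f t = f t (+) f c.
Proof.
elim: L f => [|g L IH] f //; rewrite wires_cons /= inE negb_or.
move=> /andP[/andP[_ g1L] /andP[g2L uL]].
case/predU1P => [eg | ctL]; first subst g.
  rewrite sem_layer_notin; first by rewrite /sem_gate eqxx.
  exact: contra (@targets_wires L t) g2L.
have /andP[cL tL] := mem_wires ctL.
rewrite IH // /sem_gate /=; case: eqP => [tg | _]; first by rewrite -tg tL in g2L.
by case: eqP => [cg | _] //; rewrite -cg cL in g2L.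
Qed.

Lemma control_notin_targets L g : uniq (wires L) -> g \in L -> g.1 \notin targets L.
Proof.
elim: L => [|h L IH] //; rewrite wires_cons /= inE negb_or.
move=> /andP[/andP[h12 h1L] /andP[h2L uL]].
case/predU1P => [-> | gL]; rewrite inE negb_or.
  by rewrite h12 (contra (@targets_wires L _) h1L).
rewrite IH // andbT; apply: contra h2L => /eqP <-; by case/andP: (mem_wires gL).
Qed.

Lemma sem_layerK L : uniq (wires L) -> involutive (sem_layer L).
Proof.
move=> uL f; apply: functional_extensionality => i.
have [/mapP[[c t] ctL ->] | iL] := boolP (i \in targets L); last by rewrite !sem_layer_notin.
rewrite !(sem_layer_target _ uL ctL) (sem_layer_notin _ (control_notin_targets uL ctL)) /=.
by rewrite -addbA addbb addbF.
Qed.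

Lemma sem_circuit_cat c1 c2 f : sem_circuit (c1 ++ c2) f = sem_circuit c2 (sem_circuit c1 f).
Proof. exact: foldl_cat. Qed.

Lemma sem_circuit_revK c f : disjoint_layers c -> sem_circuit (rev c) (sem_circuit c f) = f.
Proof.
elim: c f => [|L c IH] f //= /andP[uL dc].
by rewrite rev_cons -cats1 sem_circuit_cat IH //= sem_layerK.
Qed.

Lemma sem_circuit_xor c f h :
  sem_circuit c (xorf f h) = xorf (sem_circuit c f) (sem_circuit c h).
Proof.
have gateD g f' h' : sem_gate g (xorf f' h') = xorf (sem_gate g f') (sem_gate g h').
  apply: functional_extensionality => i; rewrite /sem_gate /xorf.
  by case: (i == g.2); rewrite // addbACA.
have layerD L f' h' : sem_layer L (xorf f' h') = xorf (sem_layer L f') (sem_layer L h').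
  by elim: L f' h' => [|g L IH] f' h' //=; rewrite gateD IH.
by elim: c f h => [|L c IH] f h //=; rewrite layerD IH.
Qed.

Lemma sem_circuit_notin c f i :
  (forall L, L \in c -> i \notin targets L) -> sem_circuit c f i = f i.
Proof.
elim: c f => [|L c IH] f //= iL.
rewrite IH => [|L' L'c]; first by rewrite sem_layer_notin // iL ?mem_head.
by apply: iL; rewrite inE L'c orbT.
Qed.

Lemma sem_conjugate D L f (g := sem_circuit (rev D) f) :
  disjoint_layers D ->
  sem_circuit (rev D ++ L :: D) f = xorf f (sem_circuit D (xorf (sem_layer L g) g)).
Proof.
move=> dD; rewrite sem_circuit_cat /= -/g.
rewrite {1}(_ : sem_layer L g = xorf g (xorf (sem_layer L g) g)); last first.
  by apply: functional_extensionality => i; rewrite /xorf addbC addbK.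
rewrite sem_circuit_xor; congr xorf.
have dD' : disjoint_layers (rev D) by rewrite /disjoint_layers all_rev.
by have := sem_circuit_revK f dD'; rewrite revK.
Qed.

Definition double_layer r (ts : seq nat) : layer :=
  [seq (nth 0 ts i, nth 0 ts (i + 2 ^ r)) | i <- iota 0 (minn (2 ^ r) (size ts - 2 ^ r))].

Definition double_round r (tss : seq (seq nat)) : layer :=
  flatten [seq double_layer r ts | ts <- tss].

Definition double_circuit K (tss : seq (seq nat)) : circuit :=
  [seq double_round r tss | r <- iota 0 K].

Lemma wires_cat L1 L2 : wires (L1 ++ L2) = wires L1 ++ wires L2.
Proof. by rewrite /wires map_cat flatten_cat. Qed.

Lemma wires_flatten (Ls : seq layer) : wires (flatten Ls) = flatten (map wires Ls).
Proof. by elim: Ls => [|L Ls IH] //=; rewrite wires_cat IH. Qed.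

Lemma double_layerP r ts g :
  reflect (exists i, [/\ i < 2 ^ r, i + 2 ^ r < size ts
                         & g = (nth 0 ts i, nth 0 ts (i + 2 ^ r))])
          (g \in double_layer r ts).
Proof.
apply: (iffP mapP) => [[i] | [i [ir its ->]]]; last by exists i; rewrite // mem_iota; lia.
by rewrite mem_iota => ilt ->; exists i; split => //; lia.
Qed.

Lemma wires_double_layer r ts :
  uniq ts -> uniq (wires (double_layer r ts)) /\ {subset wires (double_layer r ts) <= ts}.
Proof.
move=> uts; have r_gt0 := expn_gt0 2 r.
set idx := flatten [seq [:: i; i + 2 ^ r] | i <- iota 0 (minn (2 ^ r) (size ts - 2 ^ r))].
have -> : wires (double_layer r ts) = map (nth 0 ts) idx.
  by rewrite /idx /double_layer; elim: iota => // i s IH; rewrite map_cons wires_cons IH.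
have idx_lt z : z \in idx -> z < size ts.
  by case/flatten_mapP => i; rewrite mem_iota !inE => ilt /orP[] /eqP ->; lia.
split; last by move=> _ /mapP[z /idx_lt zlt ->]; apply: mem_nth.
rewrite map_inj_in_uniq => [|i j /idx_lt ilt /idx_lt jlt /eqP].
  by apply: uniq_flatten_map => [|i _|i j z]; rewrite ?iota_uniq //= ?inE ?mem_iota; lia.
by rewrite nth_uniq // => /eqP.
Qed.

Lemma wires_double_round r tss :
  uniq (flatten tss) ->
  uniq (wires (double_round r tss)) /\ {subset wires (double_round r tss) <= flatten tss}.
Proof.
move=> utss; rewrite wires_flatten -map_comp; split.
  apply: (@uniq_flatten_map_sub _ _ (fun ts => ts)) => [|ts tsin]; first by rewrite map_id.
  exact/wires_double_layer/(uniq_flatten_mem utss).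
move=> z /flatten_mapP[ts tsin zts]; apply/flattenP; exists ts => //.
by case: (wires_double_layer r (uniq_flatten_mem utss tsin)) => _; apply.
Qed.

Lemma targets_double_round r tss t :
  t \in targets (double_round r tss) ->
  exists2 ts, ts \in tss &
    exists i, [/\ i < 2 ^ r, i + 2 ^ r < size ts & t = nth 0 ts (i + 2 ^ r)].
Proof.
case/mapP => g /flatten_mapP[ts tsin /double_layerP[i [ir its ->]]] ->.
by exists ts => //; exists i.
Qed.

Lemma sem_double_round r tss f ts i :
  uniq (flatten tss) -> ts \in tss -> i < size ts ->
  sem_layer (double_round r tss) f (nth 0 ts i) =
    if 2 ^ r <= i < 2 ^ r.+1 then f (nth 0 ts i) (+) f (nth 0 ts (i - 2 ^ r))
    else f (nth 0 ts i).
Proof.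
move=> utss tsin its; have uts := uniq_flatten_mem utss tsin.
have [uR _] := wires_double_round r utss.
case: ifP => [/andP[ri ir] | iR].
  apply: (sem_layer_target _ uR); apply/flatten_mapP; exists ts => //.
  apply/double_layerP; exists (i - 2 ^ r); rewrite subnK //.
  by split => //; rewrite expnS in ir; lia.
apply: sem_layer_notin; apply/negP => /targets_double_round[ts' ts'in [j [jr jts' ej]]].
have ets : ts = ts'.
  by apply: (uniq_flatten_eq utss tsin ts'in (mem_nth 0 its)); rewrite ej mem_nth.
move: ej jts'; rewrite -ets => /eqP + jts; rewrite nth_uniq // => /eqP ij.
by move: iR; rewrite ij expnS; lia.
Qed.

Lemma double_circuitS r tss :
  double_circuit r.+1 tss = rcons (double_circuit r tss) (double_round r tss).
Proof. by rewrite /double_circuit -addn1 iotaD map_cat cats1. Qed.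

Lemma disjoint_double_circuit K tss :
  uniq (flatten tss) -> disjoint_layers (double_circuit K tss).
Proof. by move=> utss; apply/allP => _ /mapP[r _ ->]; case: (wires_double_round r utss). Qed.

Lemma targets_double_circuit K tss L t :
  L \in double_circuit K tss -> t \in targets L -> t \in flatten tss.
Proof.
case/mapP => r _ -> /targets_double_round[ts tsin [j [_ jts ->]]].
by apply/flattenP; exists ts; rewrite // mem_nth.
Qed.

Lemma sem_double_circuit_notin K tss f i :
  i \notin flatten tss -> sem_circuit (double_circuit K tss) f i = f i.
Proof.
move=> itss; apply: sem_circuit_notin => L LD.
exact: contra (targets_double_circuit LD) itss.
Qed.

Section Doubling.
Variables (tss : seq (seq nat)) (delta : nat -> bool).
Hypothesis utss : uniq (flatten tss).
Hypothesis delta_tail :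
  forall ts i, ts \in tss -> 0 < i < size ts -> delta (nth 0 ts i) = false.

Lemma sem_double_circuit r ts i :
  ts \in tss -> i < size ts ->
  sem_circuit (double_circuit r tss) delta (nth 0 ts i) = (i < 2 ^ r) && delta (head 0 ts).
Proof.
elim: r i => [|r IH] i tsin its.
  by case: i its => [|i] its //=; rewrite delta_tail.
rewrite double_circuitS -cats1 sem_circuit_cat /= sem_double_round //.
case: ifP => [/andP[ri ir] | /negbT iR].
  rewrite !IH //; last lia.
  by rewrite expnS in ir *; rewrite ir ltnNge ri /=; have -> : i - 2 ^ r < 2 ^ r by lia.
by rewrite IH //; rewrite expnS in iR *; congr andb; lia.
Qed.

Lemma sem_double_circuit_spread K ts t :
  size ts <= 2 ^ K -> ts \in tss -> t \in ts ->
  sem_circuit (double_circuit K tss) delta t = delta (head 0 ts).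
Proof.
move=> tsK tsin tin; rewrite -(nth_index 0 tin) sem_double_circuit ?index_mem //.
by rewrite (leq_trans _ tsK) ?index_mem.
Qed.

End Doubling.

Definition fan_wires (p : nat * seq nat) : seq nat := p.1 :: p.2.

Definition head_gate (p : nat * seq nat) : layer :=
  if p.2 is t :: _ then [:: (p.1, t)] else [::].

Definition head_layer (ps : seq (nat * seq nat)) : layer := flatten (map head_gate ps).

Definition fanout K (ps : seq (nat * seq nat)) : circuit :=
  let D := double_circuit K (map snd ps) in rev D ++ head_layer ps :: D.

Lemma size_fanout K ps : size (fanout K ps) = (2 * K).+1.
Proof. by rewrite /fanout size_cat /= size_rev size_map size_iota; lia. Qed.

Section Fanout.
Variable ps : seq (nat * seq nat).
Hypothesis ups : uniq (flatten (map fan_wires ps)).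

Lemma uniq_fan_wires p : p \in ps -> uniq (fan_wires p).
Proof. by move=> pin; apply: (uniq_flatten_mem ups); apply: map_f. Qed.

Lemma uniq_fan_targets : uniq (flatten (map snd ps)).
Proof.
apply: (uniq_flatten_map_sub ups) => p /uniq_fan_wires /andP[_ up2]; split => // t tp.
by rewrite inE tp orbT.
Qed.

Lemma source_notin_targets p : p \in ps -> p.1 \notin flatten (map snd ps).
Proof.
move=> pin; apply/negP => /flatten_mapP[q qin p1q].
have epq : fan_wires p = fan_wires q.
  apply: (uniq_flatten_eq ups (map_f _ pin) (map_f _ qin) (mem_head _ _)).
  by rewrite inE p1q orbT.
have {}epq : p = q by move: epq; case: p {pin p1q} => [a s]; case: q {qin} => [b s'] [-> ->].
by subst q; case/andP: (uniq_fan_wires pin); rewrite p1q.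
Qed.

Lemma wires_head_layer :
  uniq (wires (head_layer ps)) /\ {subset wires (head_layer ps) <= flatten (map fan_wires ps)}.
Proof.
rewrite /head_layer wires_flatten -map_comp.
have sub p : {subset wires (head_gate p) <= fan_wires p}.
  by rewrite /head_gate; case: p => a [|t s] //= z; rewrite !inE => /orP[] ->; rewrite ?orbT.
split.
  apply: (uniq_flatten_map_sub ups) => p pin; split; last exact: sub.
  move: (uniq_fan_wires pin); rewrite /head_gate /fan_wires.
  by case: p {pin} => a [|t s] //=; rewrite !inE negb_or => /andP[/andP[a_t _] _]; rewrite a_t.
by move=> z /flatten_mapP[p pin /sub zp]; apply/flatten_mapP; exists p.
Qed.

Lemma head_layer_mem p t l : p \in ps -> p.2 = t :: l -> (p.1, t) \in head_layer ps.
Proof. by move=> pin e; apply/flatten_mapP; exists p; rewrite // /head_gate e mem_head. Qed.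

Lemma targets_head_layer t :
  t \in targets (head_layer ps) -> exists2 p, p \in ps & exists l, p.2 = t :: l.
Proof.
case/mapP => g /flatten_mapP[p pin]; rewrite /head_gate.
by case e: p.2 => [|t' l] //; rewrite inE => /eqP -> ->; exists p => //; exists l.
Qed.

Lemma head_layer_tail ts i :
  ts \in map snd ps -> 0 < i < size ts -> nth 0 ts i \notin targets (head_layer ps).
Proof.
move=> tsin /andP[i_gt0 its]; apply/negP => /targets_head_layer[p pin [l e]].
have ets : ts = p.2.
  apply: (uniq_flatten_eq uniq_fan_targets tsin (map_f _ pin) (mem_nth 0 its)).
  by rewrite e mem_head.
have uts : uniq ts := uniq_flatten_mem uniq_fan_targets tsin.
move: e; rewrite -ets => e; have ts_gt0 : 0 < size ts by rewrite e.
have /eqP : nth 0 ts 0 = nth 0 ts i by rewrite {1}e.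
by rewrite nth_uniq // => /eqP i0; rewrite -i0 in i_gt0.
Qed.

Lemma sem_fanout K f :
  (forall p, p \in ps -> size p.2 <= 2 ^ K) ->
  (forall p t, p \in ps -> t \in p.2 -> sem_circuit (fanout K ps) f t = f t (+) f p.1) /\
  (forall i, i \notin flatten (map snd ps) -> sem_circuit (fanout K ps) f i = f i).
Proof.
move=> psK; have uts := uniq_fan_targets; have [uH _] := wires_head_layer.
rewrite /fanout sem_conjugate; last exact: disjoint_double_circuit.
set D := double_circuit K _; set g := sem_circuit (rev D) f.
set delta := xorf (sem_layer (head_layer ps) g) g.
have delta_off i : i \notin targets (head_layer ps) -> delta i = false.
  by move=> iH; rewrite /delta /xorf sem_layer_notin // addbb.
have delta_head p t l : p \in ps -> p.2 = t :: l -> delta t = f p.1.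
  move=> pin e; rewrite /delta /xorf (sem_layer_target _ uH (head_layer_mem pin e)).
  rewrite addbAC addbb.
  apply: sem_circuit_notin => L; rewrite mem_rev => LD.
  exact: contra (targets_double_circuit LD) (source_notin_targets pin).
have delta_tail ts i : ts \in map snd ps -> 0 < i < size ts -> delta (nth 0 ts i) = false.
  by move=> tsin its; apply/delta_off/head_layer_tail.
split => [p t pin tp | i its].
  rewrite /xorf (sem_double_circuit_spread uts delta_tail (psK p pin) (map_f _ pin) tp).
  by case e: p.2 tp => [|t0 l] // _; rewrite /= (delta_head p t0 l).
rewrite /xorf sem_double_circuit_notin // delta_off ?addbF //.
apply: contra its => /targets_head_layer[p pin [l e]].
by apply/flatten_mapP; exists p; rewrite // e mem_head.
Qed.

Lemma valid_fanout K N :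
  {in flatten (map fan_wires ps), forall z, z < N} -> valid_circuit N (fanout K ps).
Proof.
move=> psN; have [uH sH] := wires_head_layer.
have tsN : {in flatten (map snd ps), forall z, z < N}.
  move=> z /flatten_mapP[p pin zp]; apply: psN.
  by apply/flatten_mapP; exists p; rewrite // inE zp orbT.
have vD : valid_circuit N (double_circuit K (map snd ps)).
  apply/allP => _ /mapP[r _ ->]; have [uR sR] := wires_double_round r uniq_fan_targets.
  by apply: valid_layer_wires => // z /sR; apply: tsN.
rewrite /fanout valid_circuit_cat {1}/valid_circuit all_rev /= -/(valid_circuit _ _) vD andbT.
by apply: valid_layer_wires => // z /sH; apply: psN.
Qed.

End Fanout.

Section KeyedFanout.
Variables (T : eqType) (ls : seq T) (pos : T -> nat) (B : nat).
Hypotheses (uls : uniq ls) (pos_inj : {in ls &, injective pos}).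
Hypothesis pos_ge : forall l, l \in ls -> B <= pos l.
Variables (ks : seq nat) (src : nat -> nat) (key : T -> nat).
Hypotheses (uks : uniq ks) (src_inj : {in ks &, injective src}).
Hypothesis src_lt : forall k, k \in ks -> src k < B.

Definition keyed_fans : seq (nat * seq nat) :=
  [seq (src k, [seq pos l | l <- ls & key l == k]) | k <- ks].

Lemma mem_keyed_targets z :
  z \in flatten (map snd keyed_fans) -> exists2 l, l \in ls & key l \in ks /\ z = pos l.
Proof.
case/flatten_mapP => _ /mapP[k kin ->] /mapP[l]; rewrite mem_filter => /andP[/eqP lk lin] ->.
by exists l; rewrite ?lk.
Qed.

Lemma uniq_keyed_fans : uniq (flatten (map fan_wires keyed_fans)).
Proof.
have src_pos k l : k \in ks -> l \in ls -> src k != pos l.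
  by move=> kin lin; have := src_lt kin; have := pos_ge lin; lia.
rewrite -map_comp; apply: uniq_flatten_map => // [k kin | k k' z kin k'in] /=.
  rewrite map_inj_in_uniq ?filter_uniq ?andbT //; last first.
    by move=> l l'; rewrite !mem_filter => /andP[_ +] /andP[_ +]; apply: pos_inj.
  apply/mapP => -[l]; rewrite mem_filter => /andP[_ lin] /eqP.
  by rewrite (negPf (src_pos k l kin lin)).
have fanP k0 : z \in fan_wires (src k0, [seq pos l | l <- ls & key l == k0]) ->
    z = src k0 \/ exists2 l, l \in ls & key l = k0 /\ z = pos l.
  rewrite inE => /predU1P[-> | /mapP[l]]; first by left.
  by rewrite mem_filter => /andP[/eqP lk lin] ->; right; exists l.
move=> /fanP[zk | [l lin [lk zl]]] /fanP[zk' | [l' l'in [lk' zl']]].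
- by apply: src_inj; rewrite -?zk -?zk'.
- by have := src_pos _ _ kin l'in; rewrite -zk zl' eqxx.
- by have := src_pos _ _ k'in lin; rewrite -zk' zl eqxx.
- by rewrite -lk -lk' (pos_inj lin l'in) // -zl -zl'.
Qed.

Lemma sem_keyed_fanout K f :
  size ls <= 2 ^ K ->
  (forall i, i < B -> sem_circuit (fanout K keyed_fans) f i = f i) /\
  (forall l, l \in ls -> sem_circuit (fanout K keyed_fans) f (pos l) =
                         f (pos l) (+) (key l \in ks) && f (src (key l))).
Proof.
move=> lsK; have fansK p : p \in keyed_fans -> size p.2 <= 2 ^ K.
  by case/mapP => k _ ->; rewrite size_map size_filter (leq_trans (count_size _ _)).
have [S1 S2] := sem_fanout uniq_keyed_fans f fansK.
split => [i iB | l lin].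
  by apply: S2; apply/negP => /mem_keyed_targets[l lin [_ il]]; have := pos_ge lin; lia.
case kin: (key l \in ks) => /=.
  apply: (S1 (src (key l), _)); first exact: map_f.
  by apply: map_f; rewrite mem_filter eqxx.
rewrite S2 ?addbF //; apply/negP => /mem_keyed_targets[l' l'in [kin' /(pos_inj lin l'in) ell]].
by rewrite ell kin' in kin.
Qed.

Lemma valid_keyed_fanout K N :
  B <= N -> (forall l, l \in ls -> pos l < N) -> valid_circuit N (fanout K keyed_fans).
Proof.
move=> BN posN; apply: (valid_fanout uniq_keyed_fans) => z /flatten_mapP[_ /mapP[k kin ->]].
rewrite inE => /predU1P[-> /= | /mapP[l]]; first by have := src_lt kin; lia.
by rewrite mem_filter => /andP[_ /posN lN] ->.
Qed.

End KeyedFanout.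

Definition qubo_labels n d : seq (nat * nat * nat) :=
  flatten [seq [seq (j, a, k) | a <- iota 0 d, k <- j :: iota j.+1 (n - j.+1)] | j <- iota 0 n].

Definition qubo_value (x y : seq bool) (l : nat * nat * nat) : bool :=
  let: (j, a, k) := l in nth false y a (+) nth false x j (+) (k != j) && nth false x k.

Lemma qubo_output_labels n d x y :
  qubo_output n d x y = x ++ y ++ map (qubo_value x y) (qubo_labels n d).
Proof.
rewrite /qubo_output /qubo_labels map_flatten -map_comp; congr (x ++ y ++ flatten _).
apply: eq_map => j /=; rewrite map_flatten -map_comp; congr flatten; apply: eq_map => a /=.
rewrite eqxx addbF; congr cons; rewrite -map_comp; apply/eq_in_map => k.
by rewrite mem_iota => /andP[jk _] /=; rewrite neq_ltn jk orbT.
Qed.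

Lemma uniq_qubo_labels n d : uniq (qubo_labels n d).
Proof.
apply: uniq_flatten_map => [|j _|j j' z]; rewrite ?iota_uniq //; last first.
  by move=> _ _ /flatten_mapP[a _ /mapP[k _ ->]] /flatten_mapP[a' _ /mapP[k' _ []]].
apply: uniq_flatten_map => [|a _|a a' z]; rewrite ?iota_uniq //; last first.
  by move=> _ _ /mapP[k _ ->] /mapP[k' _ []].
by rewrite map_inj_uniq => [|k k' []] //=; rewrite iota_uniq mem_iota ltnn.
Qed.

Lemma mem_qubo_labels n d j a k : (j, a, k) \in qubo_labels n d -> [/\ j < n, a < d & k < n].
Proof.
case/flatten_mapP => j'; rewrite mem_iota => /andP[_ j'n] /flatten_mapP[a'].
rewrite mem_iota => /andP[_ a'd] /mapP[k' k'in [-> -> ->]]; split => //.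
by move: k'in; rewrite inE mem_iota => /predU1P[-> | /andP[]] //; lia.
Qed.

Lemma sumn_iota_sub d n : 2 * sumn [seq d * (n - j) | j <- iota 0 n] = d * (n * n.+1).
Proof.
elim: n => [|n IH] /=; first by rewrite mul0n !muln0.
rewrite (iotaDl 1 0) -map_comp.
rewrite (eq_map (_ : _ \o _ =1 fun j => d * (n - j))) => [|j /=]; last by rewrite add1n subSS.
by nia.
Qed.

Lemma qubo_m_double n : 2 * (qubo_m n - 1) = n * n.+1.
Proof.
have even_n_nS : 2 %| n * n.+1 by rewrite dvdn2 oddM /= andbN.
rewrite /qubo_m (_ : n ^ 2 + n = n * n.+1); last by rewrite mulnS -mulnn addnC.
rewrite divnDl // addnK mulnC divnK //.
Qed.

Lemma size_qubo_labels n d : size (qubo_labels n d) = (qubo_m n - 1) * d.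
Proof.
rewrite size_flatten /shape -map_comp (_ : map _ _ = [seq d * (n - j) | j <- iota 0 n]).
  apply/eqP; rewrite -(eqn_pmul2l (_ : 0 < 2)) // sumn_iota_sub -qubo_m_double.
  by rewrite mulnCA [d * _]mulnC.
apply/eq_in_map => j; rewrite mem_iota => /andP[_ jn] /=.
apply: etrans (size_allpairs (fun a k => (j, a, k)) (iota 0 d) (j :: iota j.+1 (n - j.+1))) _.
by rewrite /= !size_iota; congr (_ * _); lia.
Qed.

Definition qubo_pos n d (l : nat * nat * nat) : nat := n + d + index l (qubo_labels n d).

Definition qubo_fanout n d K ks (src : nat -> nat) (key : nat * nat * nat -> nat) : circuit :=
  fanout K (keyed_fans (qubo_labels n d) (qubo_pos n d) ks src key).

Definition qubo_circuit n d K : circuit :=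
  qubo_fanout n d K (iota 0 n) id (fun l => l.1.1) ++
  (* the ancilla (j, a, j) gets no x_k term: its key n is not a source *)
  qubo_fanout n d K (iota 0 n) id (fun l => if l.2 == l.1.1 then n else l.2) ++
  qubo_fanout n d K (iota 0 d) (addn n) (fun l => l.1.2).

Lemma qubo_pos_inj n d : {in qubo_labels n d &, injective (qubo_pos n d)}.
Proof. by move=> l l' lin l'in /addnI; apply: index_inj. Qed.

Lemma qubo_pos_lt n d l :
  l \in qubo_labels n d -> qubo_pos n d l < n + d + size (qubo_labels n d).
Proof. by move=> lin; rewrite ltn_add2l index_mem. Qed.

Lemma qubo_width n d : n + qubo_m n * d = n + d + size (qubo_labels n d).
Proof. by rewrite size_qubo_labels -addnA -{2}[d]mul1n -mulnDl subnKC // /qubo_m; lia. Qed.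

Section QuboFanout.
Variables (n d K : nat) (ks : seq nat) (src : nat -> nat) (key : nat * nat * nat -> nat).
Hypotheses (uks : uniq ks) (src_inj : {in ks &, injective src}).
Hypothesis src_lt : forall k, k \in ks -> src k < n + d.

Lemma valid_qubo_fanout :
  valid_circuit (n + d + size (qubo_labels n d)) (qubo_fanout n d K ks src key).
Proof.
apply: (valid_keyed_fanout (B := n + d)) => //; last exact: qubo_pos_lt.
- exact: uniq_qubo_labels.
- exact: qubo_pos_inj.
- by move=> l _; apply: leq_addr.
- exact: leq_addr.
Qed.

Lemma sem_qubo_fanout f :
  size (qubo_labels n d) <= 2 ^ K ->
  (forall i, i < n + d -> sem_circuit (qubo_fanout n d K ks src key) f i = f i) /\
  (forall l, l \in qubo_labels n d ->
     sem_circuit (qubo_fanout n d K ks src key) f (qubo_pos n d l) =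
     f (qubo_pos n d l) (+) (key l \in ks) && f (src (key l))).
Proof.
apply: (sem_keyed_fanout (B := n + d)) => //.
- exact: uniq_qubo_labels.
- exact: qubo_pos_inj.
- by move=> l _; apply: leq_addr.
Qed.

End QuboFanout.

Lemma valid_qubo_circuit n d K : valid_circuit (n + qubo_m n * d) (qubo_circuit n d K).
Proof.
have idN k : k \in iota 0 n -> id k < n + d by rewrite mem_iota; lia.
have addnN k : k \in iota 0 d -> n + k < n + d by rewrite mem_iota; lia.
rewrite qubo_width valid_circuit_cat [X in _ && X]valid_circuit_cat.
by rewrite !valid_qubo_fanout ?iota_uniq //; move=> k k' _ _ /addnI.
Qed.

Lemma sem_qubo_circuit n d K f :
  size (qubo_labels n d) <= 2 ^ K ->
  (forall i, i < n + d -> sem_circuit (qubo_circuit n d K) f i = f i) /\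
  (forall j a k, (j, a, k) \in qubo_labels n d ->
     sem_circuit (qubo_circuit n d K) f (qubo_pos n d (j, a, k)) =
     f (qubo_pos n d (j, a, k)) (+) f j (+) (k != j) && f k (+) f (n + a)).
Proof.
move=> lK; have idN k : k \in iota 0 n -> id k < n + d by rewrite mem_iota; lia.
have addnN k : k \in iota 0 d -> n + k < n + d by rewrite mem_iota; lia.
have addn_inj : {in iota 0 d &, injective (addn n)} by move=> k k' _ _ /addnI.
rewrite /qubo_circuit 2!sem_circuit_cat.
set f1 := sem_circuit _ f; set f2 := sem_circuit _ f1.
have id_inj : {in iota 0 n &, injective id} by [].
have [J1 J2] := sem_qubo_fanout (fun l => l.1.1) (iota_uniq 0 n) id_inj idN f lK.
have [K1 K2] := sem_qubo_fanout (fun l => if l.2 == l.1.1 then n else l.2)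
  (iota_uniq 0 n) id_inj idN f1 lK.
have [A1 A2] := sem_qubo_fanout (fun l => l.1.2) (iota_uniq 0 d) addn_inj addnN f2 lK.
have f1_low i : i < n + d -> f1 i = f i by move=> iN; rewrite /f1 J1.
have f2_low i : i < n + d -> f2 i = f i by move=> iN; rewrite /f2 K1 // f1_low.
split => [i iN | j a k lin]; first by rewrite A1 // f2_low.
have [jn ad kn] := mem_qubo_labels lin.
rewrite A2 // (f2_low (n + a)) ?ltn_add2l // /f2 K2 // /f1 J2 //= !mem_iota /= jn ad.
by case: eqP => [-> | /eqP kj]; rewrite /= ?add0n ?ltnn ?addbF ?kn ?kj -/f1 ?f1_low //; lia.
Qed.

Lemma run_qubo_circuit n d K x y :
  size x = n -> size y = d -> size (qubo_labels n d) <= 2 ^ K ->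
  run_circuit (qubo_circuit n d K) (qubo_input n d x y) = qubo_output n d x y.
Proof.
move=> sx sy lK; set s := qubo_input n d x y.
have sxy : size (x ++ y) = n + d by rewrite size_cat sx sy.
have s_size : size s = n + qubo_m n * d.
  by rewrite /s /qubo_input catA size_cat sxy size_nseq qubo_width size_qubo_labels.
have s_x j : j < n -> nth false s j = nth false x j.
  by move=> jn; rewrite /s /qubo_input nth_cat sx jn.
have s_y a : a < d -> nth false s (n + a) = nth false y a.
  by move=> ad; rewrite /s /qubo_input nth_cat sx ltnNge leq_addr /= addKn nth_cat sy ad.
have s_anc l : nth false s (qubo_pos n d l) = false.
  by rewrite /s /qubo_input catA nth_cat sxy ltnNge leq_addr /= addKn nth_nseq if_same.
have [low anc] := sem_qubo_circuit (nth false s) lK.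
have run_size := size_run_circuit (valid_qubo_circuit n d K) s_size.
rewrite qubo_output_labels catA; apply: (@eq_from_nth _ false) => [|i].
  by rewrite run_size size_cat sxy size_map qubo_width.
rewrite run_size qubo_width nth_run_circuit => iN.
have [i_low | i_high] := ltnP i (n + d).
  by rewrite low // /s /qubo_input catA !nth_cat sxy i_low.
have [[[j a] k] lin ->] : exists2 l, l \in qubo_labels n d & i = qubo_pos n d l.
  have idx_lt : i - (n + d) < size (qubo_labels n d) by rewrite ltn_subLR.
  exists (nth (0, 0, 0) (qubo_labels n d) (i - (n + d))); first exact: mem_nth.
  by rewrite /qubo_pos index_uniq ?uniq_qubo_labels // subnKC.
have [jn ad kn] := mem_qubo_labels lin.
rewrite anc // s_anc s_x // s_y // nth_cat sxy /qubo_pos ltnNge leq_addr /= addKn.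
rewrite (nth_map (0, 0, 0)) ?index_mem // nth_index //= ?s_x //.
by rewrite addbC addbA.
Qed.

Lemma qubo_m_le n : qubo_m n - 1 <= n * n.
Proof. by have := qubo_m_double n; rewrite mulnS; nia. Qed.

Theorem mainTheorem2 :
  exists C : nat, forall n d : nat, 0 < n -> 0 < d ->
    exists circ : circuit,
      valid_circuit (n + qubo_m n * d) circ /\
      depth circ <= C * (trunc_log 2 n + trunc_log 2 d + 1) /\
      forall x y : seq bool, size x = n -> size y = d ->
        run_circuit circ (qubo_input n d x y) = qubo_output n d x y.
Proof.
(* the depth is 3 (2 K + 1) = 12 a + 6 b + 3 for K = 2 a + b *)
exists 21 => n d _ _.
set a := (trunc_log 2 n).+1; set b := (trunc_log 2 d).+1.
have n_le : n <= 2 ^ a by apply/ltnW/trunc_log_ltn.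
have d_le : d <= 2 ^ b by apply/ltnW/trunc_log_ltn.
have lK : size (qubo_labels n d) <= 2 ^ (a + a + b).
  rewrite size_qubo_labels !expnD leq_mul //.
  by apply: leq_trans (qubo_m_le n) _; apply: leq_mul.
exists (qubo_circuit n d (a + a + b)); split; first exact: valid_qubo_circuit.
split; last by move=> x y sx sy; apply: run_qubo_circuit.
by rewrite /depth size_cat size_fanout size_cat !size_fanout /a /b; lia.
Qed.
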